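(* Let $d \ge 2$ be an integer and, for $\nu > 0$, let $h_1(\nu;d) = (\nu+1)^2 + 4 \nu^2 (d-1)$ and $$h_2(\nu;d) = \frac{(\nu + 1) \sqrt{h_1(\nu;d)} - (\nu+1)^2}{4 \nu^2 (d-1)} - \frac{1}{2}.$$ Then $\sup_{\nu > 0} h_2(\nu;d) = \lim_{\nu \to 0^+} h_2(\nu;d) = 0$. *)

From HB Require Import structures.
From mathcomp Require Import all_boot all_order all_algebra.
From mathcomp Require Import all_classical all_reals all_analysis.
Set Implicit Arguments. Unset Strict Implicit. Unset Printing Implicit Defensive.
Import Order.TTheory GRing.Theory Num.Theory.
Import numFieldNormedType.Exports.
Local Open Scope classical_set_scope.
Local Open Scope ring_scope.

Definition h1 {R : realType} (d : nat) (nu : R) : R :=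
  (nu + 1) ^+ 2 + 4 * nu ^+ 2 * (d%:R - 1).

Definition h2 {R : realType} (d : nat) (nu : R) : R :=
  ((nu + 1) * Num.sqrt (h1 d nu) - (nu + 1) ^+ 2) / (4 * nu ^+ 2 * (d%:R - 1))
  - 1 / 2.

From HB Require Import structures.
From mathcomp Require Import all_boot all_order all_algebra.
From mathcomp Require Import all_classical all_reals all_analysis.
From mathcomp Require Import lra ring.
Import Order.TTheory GRing.Theory Num.Theory.
Import numFieldNormedType.Exports.
Local Open Scope classical_set_scope.
Local Open Scope ring_scope.

(* Since 4 nu^2 (d - 1) = h_1 - (nu + 1)^2, multiplying by the conjugate of
   sqrt h_1 - (nu + 1) rewrites h_2 as (nu + 1) / (sqrt h_1 + nu + 1) - 1/2.
   This form is continuous at 0 with value 0, and it is negative for nu > 0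
   because sqrt h_1 > nu + 1.  So 0 is an upper bound of the values of h_2
   which is also their limit at 0+, hence their supremum. *)

Lemma divr_subr_sqr (F : fieldType) (a s : F) :
  s - a != 0 -> s + a != 0 -> (a * s - a ^+ 2) / (s ^+ 2 - a ^+ 2) = a / (s + a).
Proof.
move=> sa_neq0 sDa_neq0; rewrite subr_sqr; field.
by rewrite sa_neq0 sDa_neq0.
Qed.

Lemma sup_eq_cvg {R : realType} {T : Type} {F : set_system T}
    {FF : ProperFilter F} {S : set R} {f : T -> R} {l : R} :
  ubound S l -> (\forall x \near F, S (f x)) -> f x @[x --> F] --> l ->
  has_sup S /\ sup S = l.
Proof.
move=> Sl Sf fl.
have S_neq0 : S !=set0 by have [x Sfx] := filter_ex Sf; exists (f x).
split; first by split; last exists l.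
apply/eqP; rewrite eq_le ge_sup //=.
apply: (cvgr_to_le fl); apply: filterS Sf => x Sfx.
by apply: sup_upper_bound => //; split; last exists l.
Qed.

Definition h2_conj {R : realType} (d : nat) (nu : R) : R :=
  (nu + 1) / (Num.sqrt (h1 d nu) + (nu + 1)) - 1 / 2.

Lemma h2_conj_cvg0 (R : realType) (d : nat) :
  h2_conj d x @[x --> (0 : R)] --> (0 : R).
Proof.
have h1_cvg : h1 d x @[x --> (0 : R)] --> (1 : R).
  rewrite [X in _ --> X](_ : 1 = h1 d 0); last by rewrite /h1; ring.
  apply: cvgD; first by rewrite expr2; apply: cvgM; apply: cvgD => //; exact: cvg_cst.
  apply: cvgM; last exact: cvg_cst.
  by apply: cvgM; [exact: cvg_cst | rewrite expr2; apply: cvgM].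
have sqrt_cvg : Num.sqrt (h1 d x) @[x --> (0 : R)] --> (1 : R).
  by rewrite -[X in _ --> X]sqrtr1; exact: (continuous_cvg _ (@sqrt_continuous R 1)).
have nuD1_cvg : x + 1 @[x --> (0 : R)] --> (1 : R).
  by rewrite -[X in _ --> X]add0r; apply: cvgD => //; exact: cvg_cst.
rewrite /h2_conj [X in _ --> X](_ : 0 = 1 * (1 + 1)^-1 - 1 / 2); last by field.
apply: cvgB; last exact: cvg_cst.
apply: (cvgM nuD1_cvg); apply: (cvgV _ (cvgD sqrt_cvg nuD1_cvg)).
by rewrite (_ : 1 + 1 = 2) ?pnatr_eq0.
Qed.

Section h2_positive_argument.

Variables (R : realType) (d : nat) (nu : R).
Hypotheses (d_ge2 : (2 <= d)%N) (nu_gt0 : 0 < nu).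

Let dm1_gt0 : 0 < d%:R - 1 :> R.
Proof. by rewrite subr_gt0 (_ : 1 = 1%:R) // ltr_nat. Qed.

Let h1_sub_sqr : h1 d nu - (nu + 1) ^+ 2 = 4 * nu ^+ 2 * (d%:R - 1).
Proof. by rewrite /h1; ring. Qed.

Let nuD1_gt0 : 0 < nu + 1.
Proof. by rewrite addr_gt0. Qed.

Lemma h1_gt_sqr : (nu + 1) ^+ 2 < h1 d nu.
Proof. by rewrite -subr_gt0 h1_sub_sqr !mulr_gt0 // exprn_gt0. Qed.

Lemma sqrt_h1_gt : nu + 1 < Num.sqrt (h1 d nu).
Proof.
rewrite -[X in X < _]gtr0_norm // -sqrtr_sqr ltr_sqrt ?h1_gt_sqr //.
by rewrite (lt_trans _ h1_gt_sqr) // exprn_gt0.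
Qed.

Lemma h2E : h2 d nu = h2_conj d nu.
Proof.
have h1_ge0 : 0 <= h1 d nu by apply: ltW; apply: le_lt_trans h1_gt_sqr; exact: sqr_ge0.
rewrite /h2 /h2_conj -h1_sub_sqr -[X in _ / (X - _)](sqr_sqrtr h1_ge0).
rewrite divr_subr_sqr // gt_eqF ?subr_gt0 ?sqrt_h1_gt //.
by rewrite addr_gt0 // (lt_trans nuD1_gt0 sqrt_h1_gt).
Qed.

Lemma h2_conj_lt0 : h2_conj d nu < 0.
Proof.
have a_lt_s := sqrt_h1_gt; have a_gt0 := nuD1_gt0.
by rewrite /h2_conj subr_lt0 ltr_pdivrMr; lra.
Qed.

End h2_positive_argument.

Theorem lemma5 (R : realType) (d : nat) (hd : (2 <= d)%N) :
  let S := [set h2 d nu | nu in [set nu : R | 0 < nu]] in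
  [/\ has_sup S, sup S = 0 & h2 d x @[x --> (0 : R)^'+] --> (0 : R)].
Proof.
move=> S.
have S_le0 : ubound S 0.
  by move=> _ [nu /= nu_gt0 <-]; rewrite h2E // ltW // h2_conj_lt0.
have near0_pos : \forall x \near (0 : R)^'+, 0 < x by exact: nbhs_right_gt.
have h2_cvg : h2 d x @[x --> (0 : R)^'+] --> (0 : R).
  have h2_conj_cvg : h2_conj d x @[x --> (0 : R)^'+] --> (0 : R).
    by apply: cvg_within_filter; exact: h2_conj_cvg0.
  apply: cvg_trans h2_conj_cvg.
  by apply: near_eq_cvg; apply: filterS near0_pos => x x_gt0; rewrite h2E.
have S_near : \forall x \near (0 : R)^'+, S (h2 d x).
  by apply: filterS near0_pos => x x_gt0; exists x.
by have [S_has_sup S_sup] := sup_eq_cvg S_le0 S_near h2_cvg; split.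
Qed.
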